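(* Assume $\mathscr{R}_0>\frac{\sigma_m(\mu+r)C_I}{\mu\beta}$ (equivalently $C_I<\frac{\beta A}{(\mu+r)(\mu+\beta+\rho)}$) and $$\frac{\mu^2}{\mu+r}\left(\sqrt{\frac{\beta}{\mu\sigma_m}+\frac{1}{\sigma_s}}-\sqrt{\frac{1}{\sigma_s}}\right)^2<C_I<\frac{\beta^2\sigma_s}{(\mu+r)\sigma_m^2}.$$ Then, with $K=1+\frac{\sigma_m(\mu+r)}{\mu\beta}C_I$: $E^*$ is the unique endemic equilibrium of (3) if $1<\mathscr{R}_0<(\sqrt p+\sqrt q)^2$; all of $E^*,E_1^*,E_2^*$ are endemic equilibria if $(\sqrt p+\sqrt q)^2\le\mathscr{R}_0<K$; $E^*$ and $E_1^*$ are endemic equilibria but $E_2^*$ is not if $\mathscr{R}_0=K$; $E_1^*$ is the unique endemic equilibrium if $\mathscr{R}_0>K$.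
   Context: Let $A,\sigma_m,\sigma_s,\mu,\rho,\beta,r,C_I$ be positive constants. Write $[x]^+=\max\{0,x\}$ and $T(I_s)=rI_s$ if $I_s<C_I$, $T(I_s)=rC_I$ if $I_s\ge C_I$. System (3) is $$S'=A-\sigma_mSI_m-\sigma_sS[I_s-C_I]^+-\mu S,\quad I_m'=\sigma_mSI_m+\sigma_sS[I_s-C_I]^+-(\mu+\rho+\beta)I_m,\quad I_s'=\beta I_m-T(I_s)-\mu I_s.$$ $\mathscr{R}_0=\frac{A\sigma_m}{\mu(\mu+\beta+\rho)}$. An endemic equilibrium is an equilibrium of (3) with $S,I_m,I_s>0$. $E^*=(S^*,I_m^*,I_s^* )$ with $S^*=\frac{\mu+\beta+\rho}{\sigma_m}$, $I_m^*=\frac{\mu(\mathscr{R}_0-1)}{\sigma_m}$, $I_s^*=\frac{\mu\beta(\mathscr{R}_0-1)}{\sigma_m(\mu+r)}$. Let $p=\frac{(\mu+r)\sigma_m\sigma_sC_I}{\mu(\mu\sigma_m+\beta\sigma_s)}$, $q=\frac{\mu\sigma_m}{\mu\sigma_m+\beta\sigma_s}$, and $S_{1,2}^*=\frac{\mu+\beta+\rho}{2\sigma_m}\big\{\mathscr{R}_0-p+q\mp\sqrt{(\mathscr{R}_0-p-q)^2-4pq}\big\}$ (minus sign for $S_1^*$, plus for $S_2^*$), $I_{m_i}^*=\frac{\mu\mathscr{R}_0}{\sigma_m}-\frac{\mu S_i^*}{\mu+\beta+\rho}$, $I_{s_i}^*=\frac{\beta\mathscr{R}_0}{\sigma_m}-\frac{\beta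 S_i^*}{\mu+\beta+\rho}-\frac{rC_I}{\mu}$, $E_i^*=(S_i^*,I_{m_i}^*,I_{s_i}^* )$, $i=1,2$. ''$E_i^*$ exists'' / ''$E_i^*$ is an endemic equilibrium'' means $S_i^*$ is real, $S_i^*>0$, $I_{m_i}^*>0$ and $I_{s_i}^*>C_I$; ''$E^*$ exists'' means $E^*$ is an endemic equilibrium. *)

From Stdlib Require Import Reals Lra.
Open Scope R_scope.

Definition pos_part (x : R) : R := Rmax 0 x.

Definition Tf (r CI Is : R) : R := if Rlt_dec Is CI then r * Is else r * CI.

Definition is_equilibrium (A sm ss mu rho beta r CI S Im Is : R) : Prop :=
  A - sm * S * Im - ss * S * pos_part (Is - CI) - mu * S = 0 /\
  sm * S * Im + ss * S * pos_part (Is - CI) - (mu + rho + beta) * Im = 0 /\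
  beta * Im - Tf r CI Is - mu * Is = 0.

Definition is_endemic_eq (A sm ss mu rho beta r CI S Im Is : R) : Prop :=
  0 < S /\ 0 < Im /\ 0 < Is /\ is_equilibrium A sm ss mu rho beta r CI S Im Is.

Definition Rnot (A sm mu rho beta : R) : R := A * sm / (mu * (mu + beta + rho)).

Definition pp (sm ss mu beta r CI : R) : R :=
  (mu + r) * sm * ss * CI / (mu * (mu * sm + beta * ss)).
Definition qq (sm ss mu beta : R) : R := mu * sm / (mu * sm + beta * ss).

Definition Sstar (sm mu rho beta : R) : R := (mu + beta + rho) / sm.
Definition Imstar (A sm mu rho beta : R) : R := mu * (Rnot A sm mu rho beta - 1) / sm.
Definition Isstar (A sm mu rho beta r : R) : R :=
  mu * beta * (Rnot A sm mu rho beta - 1) / (sm * (mu + r)).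

(* discriminant (Rnot - p - q)^2 - 4pq; S_i^* is real iff it is >= 0 *)
Definition disc (A sm ss mu rho beta r CI : R) : R :=
  let R := Rnot A sm mu rho beta in
  let p := pp sm ss mu beta r CI in
  let q := qq sm ss mu beta in
  (R - p - q) ^ 2 - 4 * p * q.

Definition S1star (A sm ss mu rho beta r CI : R) : R :=
  (mu + beta + rho) / (2 * sm) *
  (Rnot A sm mu rho beta - pp sm ss mu beta r CI + qq sm ss mu beta
   - sqrt (disc A sm ss mu rho beta r CI)).
Definition S2star (A sm ss mu rho beta r CI : R) : R :=
  (mu + beta + rho) / (2 * sm) *
  (Rnot A sm mu rho beta - pp sm ss mu beta r CI + qq sm ss mu beta
   + sqrt (disc A sm ss mu rho beta r CI)).

Definition Im_of (A sm mu rho beta S : R) : R :=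
  mu * Rnot A sm mu rho beta / sm - mu * S / (mu + beta + rho).
Definition Is_of (A sm mu rho beta r CI S : R) : R :=
  beta * Rnot A sm mu rho beta / sm - beta * S / (mu + beta + rho) - r * CI / mu.

(* "E_i^* exists / is an endemic equilibrium" in the paper's sense:
   S_i^* real, S_i^* > 0, I_{m_i}^* > 0, I_{s_i}^* > C_I *)
Definition Ei_exists (A sm ss mu rho beta r CI S : R) : Prop :=
  0 <= disc A sm ss mu rho beta r CI /\ 0 < S /\
  0 < Im_of A sm mu rho beta S /\ CI < Is_of A sm mu rho beta r CI S.

(* On the branch I_s <= C_I the system is linear; its only equilibrium is E^*, admissible
   exactly when 1 < R0 <= K.  On the branch I_s > C_I, in the variable s = sm S / (mu+beta+rho),
   the equilibria are the roots of s^2 - (R0 - p + q) s + q R0 lying in (0, R0 - (K - 1)), and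
   the two roots correspond to S_1^* and S_2^*.  At the endpoint s = R0 - (K - 1) the quadratic
   equals q (K - 1) (K - R0), whose sign locates the endpoint relative to the roots.  A root
   below the endpoint forces R0 >= (sqrt p + sqrt q)^2 by AM-GM, and the two bounds on C_I
   give (sqrt p + sqrt q)^2 < K and sqrt p + sqrt q > 1. *)

From Pilot Require Import Defs.
From Stdlib Require Import Reals Lra Psatz.
Open Scope R_scope.

Ltac positivity :=
  repeat (apply Rmult_lt_0_compat || apply Rinv_0_lt_compat || apply pow_lt); try nra.

Section MonicQuadratic.
Variables b c : R.

Local Notation Delta := (b ^ 2 - 4 * c).
Local Notation root_lo := ((b - sqrt Delta) / 2).
Local Notation root_hi := ((b + sqrt Delta) / 2).

Lemma quadratic_factor y : 0 <= Delta -> y ^ 2 - b * y + c = (y - root_lo) * (y - root_hi).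
Proof.
  intros HD.
  transitivity ((y - b / 2) ^ 2 - sqrt Delta ^ 2 / 4); [rewrite pow2_sqrt by exact HD|]; field.
Qed.

Lemma quadratic_root_lo_pos : 0 <= Delta -> 0 < b -> 0 < c -> 0 < root_lo.
Proof.
  intros HD Hb Hc.
  assert (Hprod : root_lo * root_hi = c).
  { pose proof (quadratic_factor 0 HD). lra. }
  pose proof (sqrt_pos Delta). nra.
Qed.

Lemma quadratic_neg_between y : y ^ 2 - b * y + c < 0 -> 0 < Delta /\ root_lo < y < root_hi.
Proof.
  intros Hneg.
  assert (HD : 0 < Delta).
  { replace Delta with ((2 * y - b) ^ 2 - 4 * (y ^ 2 - b * y + c)) by ring.
    pose proof (pow2_ge_0 (2 * y - b)). lra. }
  rewrite (quadratic_factor y (Rlt_le _ _ HD)) in Hneg.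
  pose proof (sqrt_pos Delta). split; [exact HD | split; nra].
Qed.

Lemma quadratic_zero_right y :
  y ^ 2 - b * y + c = 0 -> b / 2 < y -> 0 < Delta /\ root_lo < y /\ root_hi = y.
Proof.
  intros Hzero Hy.
  assert (HD : Delta = (2 * y - b) ^ 2).
  { replace Delta with ((2 * y - b) ^ 2 - 4 * (y ^ 2 - b * y + c)) by ring. lra. }
  rewrite HD, sqrt_pow2 by lra. nra.
Qed.

Lemma quadratic_pos_right y :
  0 <= Delta -> b / 2 <= y -> 0 < y ^ 2 - b * y + c -> root_hi < y.
Proof.
  intros HD Hy Hpos. rewrite (quadratic_factor y HD) in Hpos.
  pose proof (sqrt_pos Delta). nra.
Qed.

End MonicQuadratic.

Lemma lt_of_pow2_lt u v : 0 <= v -> u ^ 2 < v ^ 2 -> u < v.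
Proof. intros Hv Hsq. destruct (Rlt_or_le u v) as [|Hle]; [assumption|]. nra. Qed.

Lemma sqrt_sum_sq p q :
  0 <= p -> 0 <= q -> (sqrt p + sqrt q) ^ 2 = p + q + 2 * (sqrt p * sqrt q).
Proof.
  intros Hp Hq. rewrite <- (pow2_sqrt p Hp) at 2. rewrite <- (pow2_sqrt q Hq) at 2. ring.
Qed.

(* Writing u = R0 - p - y > 0, the root satisfies y u = q (u + p), hence
   (R0 - p - q) u = u^2 + p q >= 2 u sqrt(p q). *)
Lemma sqrt_sum_sq_le_of_root p q R0 y :
  0 < p -> 0 < q -> 0 < y -> y < R0 - p -> y ^ 2 - (R0 - p + q) * y + q * R0 = 0 ->
  (sqrt p + sqrt q) ^ 2 <= R0.
Proof.
  intros Hp Hq Hy HyR Hroot.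
  set (u := R0 - p - y).
  assert (Hu : 0 < u) by (unfold u; lra).
  assert (Hgap : (R0 - p - q) * u = u ^ 2 + (sqrt p * sqrt q) ^ 2).
  { rewrite Rpow_mult_distr, !pow2_sqrt by lra. unfold u. nra. }
  assert (Hamgm : 2 * (sqrt p * sqrt q) * u <= (R0 - p - q) * u).
  { rewrite Hgap. pose proof (pow2_ge_0 (u - sqrt p * sqrt q)). nra. }
  rewrite sqrt_sum_sq by lra.
  assert (2 * (sqrt p * sqrt q) <= R0 - p - q) by nra. lra.
Qed.

Section Normalized.
Variables x q R0 : R.
Hypothesis Hx : 0 < x.
Hypothesis Hq : 0 < q.
Hypothesis Hq1 : q < 1.

Local Notation p := (x * (1 - q)).
Local Notation b := (R0 - p + q).
Local Notation Delta := (b ^ 2 - 4 * (q * R0)).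
Local Notation root_lo := ((b - sqrt Delta) / 2).
Local Notation root_hi := ((b + sqrt Delta) / 2).

Lemma quadratic_at_threshold : (R0 - x) ^ 2 - b * (R0 - x) + q * R0 = q * x * (1 + x - R0).
Proof. ring. Qed.

Lemma sqrt_prod_sq : (sqrt p * sqrt q) ^ 2 = p * q.
Proof. rewrite Rpow_mult_distr, !pow2_sqrt; nra. Qed.

Lemma sqrt_prod_gt (Hxq : x * q < 1 - q) : x * q < sqrt p * sqrt q.
Proof.
  apply lt_of_pow2_lt; [apply Rmult_le_pos; apply sqrt_pos|].
  rewrite sqrt_prod_sq.
  assert (0 < x * q * (1 - q - x * q)) by (apply Rmult_lt_0_compat; nra). nra.
Qed.

(* Strict AM-GM for x q and 1 - q, which differ by hypothesis. *)
Lemma sqrt_sum_sq_lt_threshold (Hxq : x * q < 1 - q) : (sqrt p + sqrt q) ^ 2 < 1 + x.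
Proof.
  assert (Hamgm : 2 * (sqrt p * sqrt q) < x * q + (1 - q)).
  { apply lt_of_pow2_lt; [nra|].
    replace ((2 * (sqrt p * sqrt q)) ^ 2) with (4 * (sqrt p * sqrt q) ^ 2) by ring.
    rewrite sqrt_prod_sq. assert (0 < (1 - q - x * q) ^ 2) by (apply pow_lt; lra). nra. }
  rewrite sqrt_sum_sq by nra. lra.
Qed.

Lemma root_lo_pos (HxR : x < R0) (HD : 0 <= Delta) : 0 < root_lo.
Proof. apply quadratic_root_lo_pos; nra. Qed.

Lemma roots_below_threshold :
  (sqrt p + sqrt q) ^ 2 <= R0 -> R0 < 1 + x -> x * q < 1 - q ->
  0 <= Delta /\ 0 < root_lo /\ root_lo <= root_hi /\ root_hi < R0 - x.
Proof.
  intros HRlo HRhi Hxq.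
  pose proof (sqrt_prod_gt Hxq) as Hpq.
  rewrite sqrt_sum_sq in HRlo by nra.
  assert (HD : 0 <= Delta).
  { replace Delta with ((R0 - p - q) ^ 2 - (2 * (sqrt p * sqrt q)) ^ 2)
      by (replace ((2 * (sqrt p * sqrt q)) ^ 2) with (4 * (sqrt p * sqrt q) ^ 2) by ring;
          rewrite sqrt_prod_sq; ring).
    assert (Hsq : (2 * (sqrt p * sqrt q)) ^ 2 <= (R0 - p - q) ^ 2) by (apply pow_incr; nra).
    lra. }
  pose proof (sqrt_pos Delta).
  repeat split; [exact HD | apply root_lo_pos; nra | lra |].
  apply quadratic_pos_right; [exact HD | nra |].
  rewrite quadratic_at_threshold. apply Rmult_lt_0_compat; nra.
Qed.

Lemma roots_at_threshold :
  R0 = 1 + x -> x * q < 1 - q ->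
  0 < Delta /\ 0 < root_lo /\ root_lo < R0 - x /\ root_hi = R0 - x.
Proof.
  intros HR Hxq.
  destruct (quadratic_zero_right b (q * R0) (R0 - x)) as [HD [Hlo Hhi]].
  - rewrite quadratic_at_threshold, HR. ring.
  - nra.
  - repeat split; try assumption. apply root_lo_pos; lra.
Qed.

Lemma roots_above_threshold :
  1 + x < R0 -> 0 < Delta /\ 0 < root_lo /\ root_lo < R0 - x < root_hi.
Proof.
  intros HR.
  destruct (quadratic_neg_between b (q * R0) (R0 - x)) as [HD Hbetween].
  - rewrite quadratic_at_threshold. assert (0 < q * x) by nra. nra.
  - repeat split; try apply Hbetween; [exact HD|]. apply root_lo_pos; lra.
Qed.

End Normalized.

Lemma pos_part_nonpos y : y <= 0 -> pos_part y = 0.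
Proof. apply Rmax_left. Qed.

Lemma pos_part_nonneg y : 0 <= y -> pos_part y = y.
Proof. apply Rmax_right. Qed.

Lemma Tf_below r CI Is : Is <= CI -> Tf r CI Is = r * Is.
Proof. intros HIs. unfold Tf. destruct (Rlt_dec Is CI); [reflexivity|]. f_equal. lra. Qed.

Lemma Tf_above r CI Is : CI <= Is -> Tf r CI Is = r * CI.
Proof. intros HIs. unfold Tf. destruct (Rlt_dec Is CI); [lra | reflexivity]. Qed.

Section Model.
Variables A sm ss mu rho beta r CI : R.
Hypotheses (Hsm : 0 < sm) (Hss : 0 < ss) (Hmu : 0 < mu) (Hrho : 0 < rho)
  (Hbeta : 0 < beta) (Hr : 0 < r) (HCI : 0 < CI).

Local Notation a := (mu + beta + rho).
Local Notation R0 := (Rnot A sm mu rho beta).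
Local Notation x := (sm * (mu + r) * CI / (mu * beta)).
Local Notation q := (qq sm ss mu beta).
Local Notation p := (pp sm ss mu beta r CI).
Local Notation b := (R0 - x * (1 - q) + q).
Local Notation endemic := (is_endemic_eq A sm ss mu rho beta r CI).

Lemma threshold_pos : 0 < x.
Proof. positivity. Qed.

Lemma qq_pos : 0 < q.
Proof. unfold qq. positivity. Qed.

Lemma qq_lt_1 : q < 1.
Proof.
  unfold qq. apply Rmult_lt_reg_r with (mu * sm + beta * ss); [nra|].
  unfold Rdiv. rewrite Rmult_assoc, Rinv_l by nra. nra.
Qed.

Lemma pp_eq : p = x * (1 - q).
Proof. unfold pp, qq. field. repeat split; nra. Qed.

Lemma threshold_mul_qq_lt : CI < beta ^ 2 * ss / ((mu + r) * sm ^ 2) -> x * q < 1 - q.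
Proof.
  intros HCIhi.
  assert (Hc : 0 < sm ^ 2 * (mu + r) / (beta * (mu * sm + beta * ss))) by positivity.
  replace (x * q) with (CI * (sm ^ 2 * (mu + r) / (beta * (mu * sm + beta * ss))))
    by (unfold qq; field; repeat split; nra).
  replace (1 - q) with (beta ^ 2 * ss / ((mu + r) * sm ^ 2)
                        * (sm ^ 2 * (mu + r) / (beta * (mu * sm + beta * ss))))
    by (unfold qq; field; repeat split; nra).
  apply Rmult_lt_compat_r; assumption.
Qed.

(* The left-hand side of the hypothesis is CI (1 - sqrt q)^2 / p,
   because beta / (mu sm) + 1 / ss = (1 / ss) / q. *)
Lemma sqrt_sum_gt_1 :
  mu ^ 2 / (mu + r) * (sqrt (beta / (mu * sm) + 1 / ss) - sqrt (1 / ss)) ^ 2 < CI ->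
  1 < sqrt p + sqrt q.
Proof.
  intros HCIlo.
  pose proof qq_pos as Hq. pose proof qq_lt_1 as Hq1.
  assert (Hp : 0 < p) by (rewrite pp_eq; pose proof threshold_pos; apply Rmult_lt_0_compat; lra).
  assert (Hsq : 0 < sqrt q) by (apply sqrt_lt_R0; exact Hq).
  assert (Hsq1 : sqrt q < 1) by (rewrite <- sqrt_1; apply sqrt_lt_1_alt; lra).
  assert (Hss1 : 0 <= 1 / ss) by (apply Rlt_le; positivity).
  assert (Hrewrite : mu ^ 2 / (mu + r) * (sqrt (beta / (mu * sm) + 1 / ss) - sqrt (1 / ss)) ^ 2
                     = CI * (1 - sqrt q) ^ 2 / p).
  { replace (beta / (mu * sm) + 1 / ss) with ((1 / ss) / q)
      by (unfold qq; field; repeat split; nra).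
    rewrite sqrt_div_alt by exact Hq.
    replace ((sqrt (1 / ss) / sqrt q - sqrt (1 / ss)) ^ 2)
      with (sqrt (1 / ss) ^ 2 * (1 - sqrt q) ^ 2 / sqrt q ^ 2) by (field; lra).
    rewrite !pow2_sqrt by lra. unfold pp, qq. field. repeat split; nra. }
  rewrite Hrewrite in HCIlo.
  assert (Hlt : (1 - sqrt q) ^ 2 < sqrt p ^ 2).
  { rewrite pow2_sqrt by lra. apply Rmult_lt_reg_r with (CI / p); [positivity|].
    replace ((1 - sqrt q) ^ 2 * (CI / p)) with (CI * (1 - sqrt q) ^ 2 / p) by (field; lra).
    replace (p * (CI / p)) with CI by (field; lra). exact HCIlo. }
  apply lt_of_pow2_lt in Hlt; [lra | apply sqrt_pos].
Qed.

Lemma Im_of_scaled s : Im_of A sm mu rho beta (a * s / sm) = mu * (R0 - s) / sm.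
Proof. unfold Im_of. field. lra. Qed.

Lemma Is_of_scaled s : Is_of A sm mu rho beta r CI (a * s / sm) = CI + beta / sm * (R0 - s - x).
Proof. unfold Is_of. field. repeat split; lra. Qed.

Lemma disc_eq : Defs.disc A sm ss mu rho beta r CI = b ^ 2 - 4 * (q * R0).
Proof. unfold Defs.disc. rewrite pp_eq. ring. Qed.

Lemma S1star_scaled :
  S1star A sm ss mu rho beta r CI = a * ((b - sqrt (b ^ 2 - 4 * (q * R0))) / 2) / sm.
Proof. unfold S1star. rewrite disc_eq, pp_eq. field. lra. Qed.

Lemma S2star_scaled :
  S2star A sm ss mu rho beta r CI = a * ((b + sqrt (b ^ 2 - 4 * (q * R0))) / 2) / sm.
Proof. unfold S2star. rewrite disc_eq, pp_eq. field. lra. Qed.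

Lemma Ei_exists_scaled s :
  Ei_exists A sm ss mu rho beta r CI (a * s / sm) <->
  0 <= b ^ 2 - 4 * (q * R0) /\ 0 < s /\ s < R0 - x.
Proof.
  unfold Ei_exists. rewrite disc_eq, Im_of_scaled, Is_of_scaled.
  assert (Hbs : 0 < beta / sm) by positivity.
  pose proof threshold_pos.
  split.
  - intros [HD [HS [_ HIs]]]. repeat split; [exact HD | | ].
    + apply Rmult_lt_reg_l with (a / sm); [positivity|]. lra.
    + apply Rmult_lt_reg_l with (beta / sm); lra.
  - intros [HD [Hs HsR]]. repeat split; [exact HD | positivity | positivity | nra].
Qed.

Lemma Isstar_eq : Isstar A sm mu rho beta r = CI * (R0 - 1) / x.
Proof. unfold Isstar. field. repeat split; lra. Qed.

Lemma endemic_Estar : 1 < R0 -> R0 <= 1 + x ->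
  endemic (Sstar sm mu rho beta) (Imstar A sm mu rho beta) (Isstar A sm mu rho beta r).
Proof.
  intros HR1 HRx. pose proof threshold_pos.
  assert (HIs : Isstar A sm mu rho beta r <= CI).
  { rewrite Isstar_eq. apply Rmult_le_reg_r with x; [lra|].
    replace (CI * (R0 - 1) / x * x) with (CI * (R0 - 1)) by (field; lra). nra. }
  unfold is_endemic_eq, is_equilibrium.
  rewrite pos_part_nonpos, Tf_below by lra.
  rewrite Isstar_eq in *. unfold Sstar, Imstar.
  repeat split; try (positivity; lra); unfold Rnot; field; repeat split; lra.
Qed.

Lemma endemic_lower_branch S Im Is : endemic S Im Is -> Is <= CI ->
  (S, Im, Is) = (Sstar sm mu rho beta, Imstar A sm mu rho beta, Isstar A sm mu rho beta r) /\
  R0 <= 1 + x.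
Proof.
  intros [HS [HIm [HIs0 [e1 [e2 e3]]]]] HIs.
  rewrite pos_part_nonpos in e1, e2 by lra. rewrite Tf_below in e3 by lra.
  pose proof threshold_pos.
  assert (HSv : S = Sstar sm mu rho beta).
  { assert (Hprod : (sm * S - a) * Im = 0) by lra.
    apply Rmult_integral in Hprod as [Hzero | Hzero]; [|lra].
    unfold Sstar. field_simplify_eq; lra. }
  assert (HImv : Im = Imstar A sm mu rho beta).
  { apply Rmult_eq_reg_l with a; [|lra].
    replace (a * Im) with (A - mu * S) by lra.
    rewrite HSv. unfold Sstar, Imstar, Rnot. field. repeat split; lra. }
  assert (HIsv : Is = Isstar A sm mu rho beta r).
  { apply Rmult_eq_reg_l with (mu + r); [|lra].
    replace ((mu + r) * Is) with (beta * Im) by lra.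
    rewrite HImv. unfold Isstar, Imstar. field. repeat split; lra. }
  split; [subst; reflexivity|].
  rewrite HIsv, Isstar_eq in HIs.
  assert (Hmul : CI * (R0 - 1) <= CI * x).
  { replace (CI * (R0 - 1)) with (CI * (R0 - 1) / x * x) by (field; lra). nra. }
  apply Rmult_le_reg_l in Hmul; lra.
Qed.

Lemma endemic_upper_branch S Im Is : endemic S Im Is -> CI < Is ->
  exists s, (S, Im, Is) = (a * s / sm, Im_of A sm mu rho beta (a * s / sm),
                           Is_of A sm mu rho beta r CI (a * s / sm)) /\
            0 < s /\ s < R0 - x /\ s ^ 2 - b * s + q * R0 = 0.
Proof.
  intros [HS [HIm [HIs0 [e1 [e2 e3]]]]] HIs.
  rewrite pos_part_nonneg in e1, e2 by lra. rewrite Tf_above in e3 by lra.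
  exists (sm * S / a).
  replace (a * (sm * S / a) / sm) with S by (field; lra).
  set (s := sm * S / a).
  assert (HSs : S = a * s / sm) by (unfold s; field; lra).
  assert (HImv : Im = mu * (R0 - s) / sm).
  { rewrite <- Im_of_scaled, <- HSs. apply Rmult_eq_reg_l with a; [|lra].
    replace (a * Im) with (A - mu * S) by lra. unfold Im_of, Rnot. field. lra. }
  assert (HIsv : Is = CI + beta / sm * (R0 - s - x)).
  { rewrite <- Is_of_scaled, <- HSs. apply Rmult_eq_reg_l with mu; [|lra].
    replace (mu * Is) with (beta * Im - r * CI) by lra.
    rewrite HImv, <- Im_of_scaled, <- HSs. unfold Im_of, Is_of. field. lra. }
  pose proof threshold_pos. pose proof qq_pos.
  assert (Hbs : 0 < beta / sm) by positivity.
  repeat split.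
  - rewrite HImv, HIsv, <- Im_of_scaled, <- Is_of_scaled, <- HSs. reflexivity.
  - unfold s. positivity.
  - assert (0 < beta / sm * (R0 - s - x)) by lra.
    apply Rmult_lt_reg_l with (beta / sm); lra.
  - rewrite HSs, HImv, HIsv in e2.
    match type of e2 with
    | ?L = 0 =>
        replace (s ^ 2 - b * s + q * R0) with (- (sm ^ 2 / (a * (mu * sm + beta * ss))) * L)
          by (unfold qq; field; repeat split; nra)
    end.
    rewrite e2. ring.
Qed.

Local Notation Estar :=
  (Sstar sm mu rho beta, Imstar A sm mu rho beta, Isstar A sm mu rho beta r).
Local Notation S1 := (S1star A sm ss mu rho beta r CI).
Local Notation S2 := (S2star A sm ss mu rho beta r CI).

Lemma Estar_unique_endemic : 1 < R0 -> R0 < (sqrt p + sqrt q) ^ 2 -> x * q < 1 - q ->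
  endemic (fst (fst Estar)) (snd (fst Estar)) (snd Estar) /\
  forall S Im Is, endemic S Im Is -> (S, Im, Is) = Estar.
Proof.
  intros HR1 HRlo Hxq. rewrite pp_eq in HRlo.
  pose proof threshold_pos as Hx. pose proof qq_pos as Hq. pose proof qq_lt_1 as Hq1.
  pose proof (sqrt_sum_sq_lt_threshold x q Hx Hq Hq1 Hxq).
  split; [apply endemic_Estar; lra|].
  intros S Im Is Hend. destruct (Rle_or_lt Is CI) as [HIs | HIs].
  - apply (endemic_lower_branch S Im Is Hend HIs).
  - destruct (endemic_upper_branch S Im Is Hend HIs) as (s & _ & Hs & HsR & Hroot).
    assert ((sqrt (x * (1 - q)) + sqrt q) ^ 2 <= R0)
      by (apply sqrt_sum_sq_le_of_root with s; nra).
    lra.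
Qed.

Lemma Estar_E1_E2_endemic :
  (sqrt p + sqrt q) ^ 2 <= R0 -> R0 < 1 + x -> x * q < 1 - q -> 1 < sqrt p + sqrt q ->
  endemic (fst (fst Estar)) (snd (fst Estar)) (snd Estar) /\
  Ei_exists A sm ss mu rho beta r CI S1 /\ Ei_exists A sm ss mu rho beta r CI S2.
Proof.
  intros HRlo HRhi Hxq Hsum. rewrite pp_eq in HRlo, Hsum.
  pose proof threshold_pos as Hx. pose proof qq_pos as Hq. pose proof qq_lt_1 as Hq1.
  destruct (roots_below_threshold x q R0 Hx Hq Hq1 HRlo HRhi Hxq) as (HD & Hlo & Hle & Hhi).
  rewrite S1star_scaled, S2star_scaled, !Ei_exists_scaled.
  repeat split; try apply endemic_Estar; nra.
Qed.

Lemma Estar_E1_endemic_not_E2 : R0 = 1 + x -> x * q < 1 - q ->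
  endemic (fst (fst Estar)) (snd (fst Estar)) (snd Estar) /\
  Ei_exists A sm ss mu rho beta r CI S1 /\ ~ Ei_exists A sm ss mu rho beta r CI S2.
Proof.
  intros HR Hxq.
  pose proof threshold_pos as Hx. pose proof qq_pos as Hq. pose proof qq_lt_1 as Hq1.
  destruct (roots_at_threshold x q R0 Hx Hq Hq1 HR Hxq) as (HD & Hlo & HloR & Hhi).
  rewrite S1star_scaled, S2star_scaled, !Ei_exists_scaled.
  repeat split; try apply endemic_Estar; lra.
Qed.

Lemma E1_unique_endemic : 1 + x < R0 ->
  Ei_exists A sm ss mu rho beta r CI S1 /\
  forall S Im Is, endemic S Im Is ->
    (S, Im, Is) = (S1, Im_of A sm mu rho beta S1, Is_of A sm mu rho beta r CI S1).
Proof.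
  intros HR.
  pose proof threshold_pos as Hx. pose proof qq_pos as Hq. pose proof qq_lt_1 as Hq1.
  destruct (roots_above_threshold x q R0 Hx Hq Hq1 HR) as (HD & Hlo & HloR & Hhi).
  rewrite S1star_scaled, Ei_exists_scaled.
  split; [repeat split; lra|].
  intros S Im Is Hend. destruct (Rle_or_lt Is CI) as [HIs | HIs].
  - destruct (endemic_lower_branch S Im Is Hend HIs). lra.
  - destruct (endemic_upper_branch S Im Is Hend HIs) as (s & -> & Hs & HsR & Hroot).
    rewrite quadratic_factor in Hroot by lra.
    apply Rmult_integral in Hroot as [Hzero | Hzero]; [|lra].
    replace s with ((b - sqrt (b ^ 2 - 4 * (q * R0))) / 2) by lra. reflexivity.
Qed.

End Model.

Theorem theorem2p2 (A sm ss mu rho beta r CI : R) :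
  0 < A -> 0 < sm -> 0 < ss -> 0 < mu -> 0 < rho -> 0 < beta -> 0 < r -> 0 < CI ->
  Rnot A sm mu rho beta > sm * (mu + r) * CI / (mu * beta) ->
  mu ^ 2 / (mu + r) * (sqrt (beta / (mu * sm) + 1 / ss) - sqrt (1 / ss)) ^ 2 < CI ->
  CI < beta ^ 2 * ss / ((mu + r) * sm ^ 2) ->
  let R := Rnot A sm mu rho beta in
  let p := pp sm ss mu beta r CI in
  let q := qq sm ss mu beta in
  let K := 1 + sm * (mu + r) / (mu * beta) * CI in
  let Es := (Sstar sm mu rho beta, Imstar A sm mu rho beta, Isstar A sm mu rho beta r) in
  let S1 := S1star A sm ss mu rho beta r CI in
  let S2 := S2star A sm ss mu rho beta r CI in
  let E1 := (S1, Im_of A sm mu rho beta S1, Is_of A sm mu rho beta r CI S1) in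
  let endemic := fun S Im Is => is_endemic_eq A sm ss mu rho beta r CI S Im Is in
  (1 < R < (sqrt p + sqrt q) ^ 2 ->
     endemic (fst (fst Es)) (snd (fst Es)) (snd Es) /\
     forall S Im Is, endemic S Im Is -> (S, Im, Is) = Es) /\
  ((sqrt p + sqrt q) ^ 2 <= R < K ->
     endemic (fst (fst Es)) (snd (fst Es)) (snd Es) /\
     Ei_exists A sm ss mu rho beta r CI S1 /\
     Ei_exists A sm ss mu rho beta r CI S2) /\
  (R = K ->
     endemic (fst (fst Es)) (snd (fst Es)) (snd Es) /\
     Ei_exists A sm ss mu rho beta r CI S1 /\
     ~ Ei_exists A sm ss mu rho beta r CI S2) /\
  (R > K ->
     Ei_exists A sm ss mu rho beta r CI S1 /\
     forall S Im Is, endemic S Im Is -> (S, Im, Is) = E1).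
Proof.
  intros _ Hsm Hss Hmu Hrho Hbeta Hr HCI _ HCIlo HCIhi R p q K Es S1 S2 E1 endemic.
  assert (HK : K = 1 + sm * (mu + r) * CI / (mu * beta)) by (unfold K; field; lra).
  pose proof (threshold_mul_qq_lt sm ss mu beta r CI Hsm Hss Hmu Hbeta Hr HCIhi) as Hxq.
  pose proof (sqrt_sum_gt_1 sm ss mu beta r CI Hsm Hss Hmu Hbeta Hr HCI HCIlo) as Hsum.
  rewrite HK. split; [|split; [|split]].
  - intros [HR1 HR2]. apply Estar_unique_endemic; assumption.
  - intros [HR1 HR2]. apply Estar_E1_E2_endemic; assumption.
  - intros HR. apply Estar_E1_endemic_not_E2; assumption.
  - intros HR. apply E1_unique_endemic; assumption.
Qed.
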